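(* Let $\Sigma$ be a finite alphabet, $\# \notin \Sigma$ a padding symbol, and $\Sigma_\# = \Sigma \cup \{\#\}$. Let $\mathcal{A} = (\Sigma_\# \times \Sigma_\#, Q, \delta, q_0, F)$ be a deterministic transducer satisfying the following two conditions: (C4) from every state of $\mathcal{A}$ some accepting state (an element of $F$) is reachable; (C11) the relation $R \subseteq \Sigma^* \times \Sigma^*$ recognised by $\mathcal{A}$ only relates words with the same Parikh vector, i.e. $(v,w) \in R$ implies $\mathbb{P}(v) = \mathbb{P}(w)$. Let $\rho_1$ and $\rho_2$ be paths in $\mathcal{A}$ that both start in the initial state $q_0$ and both end in the same (not necessarily accepting) state $q \in Q$, and let $v_1 \otimes w_1$ and $v_2 \otimes w_2$ be the words (over $\Sigma_\# \times \Sigma_\#$) read along $\rho_1$ and $\rho_2$, respectively, where $v_i$ is the first track and $w_i$ the second track. Then $$\mathbb{P}(w_1) - \mathbb{P}(v_1) = \mathbb{P}(w_2) - \mathbb{P}(v_2).$$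
   Context: A transducer (letter-to-letter automaton) over $\Sigma$ is a finite automaton $(\Sigma_\# \times \Sigma_\#, Q, \delta, q_0, F)$ whose input letters are pairs $(a,b)$ with $a,b \in \Sigma_\#$; a word over $\Sigma_\#\times\Sigma_\#$ of the form $(a_1,b_1)\cdots(a_k,b_k)$ is written $v \otimes w$ with $v = a_1\cdots a_k$, $w = b_1 \cdots b_k$. For $v,w \in \Sigma^*$, $v \otimes w$ is obtained by padding the shorter word with $\#$ to equal length; the transducer recognises the relation $R = \{(v,w) \in \Sigma^*\times\Sigma^* : v\otimes w \text{ is accepted by } \mathcal{A}\}$. Deterministic means that for each state and each letter of $\Sigma_\#\times\Sigma_\#$ there is at most one transition. For $\Sigma = \{s_1,\dots,s_n\}$, the Parikh vector $\mathbb{P}(u)$ of a word $u$ is the integer vector $(|u|_{s_1},\dots,|u|_{s_n})$ of the numbers of occurrences of $s_1,\dots,s_n$ in $u$ (occurrences of the padding symbol $\#$ are not counted); differences of Parikh vectors are taken componentwise in $\mathbb{Z}^n$.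
   Formalization: $\mathcal{A}$ also accepts no word over $\Sigma_\# \times \Sigma_\#$ other than those of the form $v \otimes w$ with $v,w \in \Sigma^*$. The paper assumes this as well. *)

From mathcomp Require Import all_boot all_order all_algebra.
Set Implicit Arguments. Unset Strict Implicit. Unset Printing Implicit Defensive.
Import GRing.Theory.
Local Open Scope ring_scope.

(* Padded alphabet Sigma_# = option Sigma, with None playing the role of #. *)
Definition padletter (Sigma : finType) := option Sigma.
Definition pletter (Sigma : finType) := (option Sigma * option Sigma)%type.

(* A deterministic letter-to-letter transducer: the transition function is
   partial (at most one transition per state and letter). *)
Record transducer (Sigma : finType) := Transducer {
  state : finType;
  delta : state -> pletter Sigma -> option state;
  init : state;
  final : {set state}
}.

Fixpoint run (Sigma : finType) (A : transducer Sigma) (q : state A)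
    (u : seq (pletter Sigma)) : option (state A) :=
  match u with
  | [::] => Some q
  | x :: u' => match delta q x with
               | Some q' => run q' u'
               | None => None
               end
  end.

Definition accepts (Sigma : finType) (A : transducer Sigma)
    (u : seq (pletter Sigma)) : bool :=
  if run (init A) u is Some q then q \in final A else false.

(* Convolution v (x) w : pad the shorter word with # to equal length. *)
Definition pad (Sigma : finType) (n : nat) (v : seq Sigma) : seq (option Sigma) :=
  map Some v ++ nseq (n - size v) None.

Definition conv (Sigma : finType) (v w : seq Sigma) : seq (pletter Sigma) :=
  zip (pad (maxn (size v) (size w)) v) (pad (maxn (size v) (size w)) w).

Definition recognised (Sigma : finType) (A : transducer Sigma) (v w : seq Sigma) : bool :=
  accepts A (conv v w).

Definition parikh (Sigma : finType) (s : seq (option Sigma)) : {ffun Sigma -> int} :=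
  [ffun a => (count_mem (Some a) s)%:Z].

Definition parikhS (Sigma : finType) (v : seq Sigma) : {ffun Sigma -> int} :=
  parikh (map Some v).

Definition track1 (Sigma : finType) (u : seq (pletter Sigma)) : seq (option Sigma) := unzip1 u.
Definition track2 (Sigma : finType) (u : seq (pletter Sigma)) : seq (option Sigma) := unzip2 u.

Definition pdiff (Sigma : finType) (x y : {ffun Sigma -> int}) : {ffun Sigma -> int} :=
  [ffun a => x a - y a].

Definition cond_C4 (Sigma : finType) (A : transducer Sigma) : Prop :=
  forall q : state A, exists (u : seq (pletter Sigma)) (q' : state A),
    run q u = Some q' /\ q' \in final A.

Definition cond_C11 (Sigma : finType) (A : transducer Sigma) : Prop :=
  forall v w : seq Sigma, recognised A v w -> parikhS v = parikhS w.

(* Standing convention "A recognises a relation": every accepted word is a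
   convolution v (x) w of words over Sigma. *)
Definition accepts_only_convolutions (Sigma : finType) (A : transducer Sigma) : Prop :=
  forall u : seq (pletter Sigma), accepts A u -> exists v w : seq Sigma, u = conv v w.

From mathcomp Require Import all_boot all_order all_algebra zify.
Import GRing.Theory.
Local Open Scope ring_scope.
Set Implicit Arguments.
Unset Strict Implicit.

(* Extend both paths by a common word [u] from [q] to an accepting state. Both
   extensions are accepted, so by (C11) each has Parikh difference zero; hence
   the difference of either prefix is minus that of [u], independently of the
   prefix. *)

Lemma run_cat (Sigma : finType) (A : transducer Sigma) (q : state A) u u' :
  run q (u ++ u') = if run q u is Some q' then run q' u' else None.
Proof. by elim: u q => [|x u IH] q //=; case: (delta q x). Qed.

Lemma parikh_cat (Sigma : finType) (s t : seq (option Sigma)) a :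
  parikh (s ++ t) a = parikh s a + parikh t a.
Proof. by rewrite !ffunE count_cat PoszD. Qed.

Lemma track1_cat (Sigma : finType) (u u' : seq (pletter Sigma)) :
  track1 (u ++ u') = track1 u ++ track1 u'.
Proof. exact: map_cat. Qed.

Lemma track2_cat (Sigma : finType) (u u' : seq (pletter Sigma)) :
  track2 (u ++ u') = track2 u ++ track2 u'.
Proof. exact: map_cat. Qed.

Lemma size_pad (Sigma : finType) n (v : seq Sigma) :
  (size v <= n)%N -> size (pad n v) = n.
Proof. by move=> le_vn; rewrite size_cat size_map size_nseq subnKC. Qed.

Lemma parikh_pad (Sigma : finType) n (v : seq Sigma) :
  parikh (pad n v) = parikhS v.
Proof.
by apply/ffunP => a; rewrite !ffunE count_cat count_nseq /= mul0n addn0.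
Qed.

Lemma parikh_track_conv (Sigma : finType) (v w : seq Sigma) :
  parikh (track1 (conv v w)) = parikhS v /\ parikh (track2 (conv v w)) = parikhS w.
Proof.
rewrite /track1 /track2 /conv unzip1_zip ?unzip2_zip ?size_pad ?leq_maxl ?leq_maxr //.
by rewrite !parikh_pad.
Qed.

Lemma parikh_tracks_accepted (Sigma : finType) (A : transducer Sigma) u :
  accepts_only_convolutions A -> cond_C11 A -> accepts A u ->
  parikh (track2 u) = parikh (track1 u).
Proof.
move=> onlyconv C11 acc; have [v [w def_u]] := onlyconv u acc.
rewrite def_u in acc *; have [-> ->] := parikh_track_conv v w.
by rewrite (C11 v w acc).
Qed.

Lemma pdiffE (Sigma : finType) (x y : {ffun Sigma -> int}) : pdiff x y = x - y.
Proof. by apply/ffunP => a; rewrite !ffunE. Qed.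

Lemma parikh_diff_prefix (Sigma : finType) (A : transducer Sigma)
    (q qf : state A) (u' u : seq (pletter Sigma)) :
  accepts_only_convolutions A -> cond_C11 A ->
  run (init A) u' = Some q -> run q u = Some qf -> qf \in final A ->
  parikh (track2 u') - parikh (track1 u') = parikh (track1 u) - parikh (track2 u).
Proof.
move=> onlyconv C11 run_u' run_u final_qf.
have acc : accepts A (u' ++ u) by rewrite /accepts run_cat run_u' run_u.
have /ffunP bal := parikh_tracks_accepted onlyconv C11 acc.
apply/ffunP => a; move: (bal a).
rewrite track1_cat track2_cat !parikh_cat !ffunE.
lia.
Qed.

Theorem mainTheorem1 (Sigma : finType) (A : transducer Sigma)
  (HR : accepts_only_convolutions A) (HC4 : cond_C4 A) (HC11 : cond_C11 A)
  (q : state A) (u1 u2 : seq (pletter Sigma)) :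
  run (init A) u1 = Some q -> run (init A) u2 = Some q ->
  pdiff (parikh (track2 u1)) (parikh (track1 u1)) =
  pdiff (parikh (track2 u2)) (parikh (track1 u2)).
Proof.
move=> run_u1 run_u2; have [u [qf [run_u final_qf]]] := HC4 q.
by rewrite !pdiffE !(parikh_diff_prefix HR HC11 _ run_u final_qf).
Qed.
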